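(* Let $f:\mathbb{R}^{d\times n}\to\mathbb{R}^m$ be $\mathcal{G}_{+}$-invariant and bi-Lipschitz with respect to $d_{\mathcal{G}_{+}}$. Fix an orthogonal matrix $R_0\in O(d)$ with $\det R_0=-1$ and $R_0^2=I_d$, and let $\psi:\mathbb{R}^{m\times 2}\to\mathbb{R}^k$ be invariant to swapping its two columns and bi-Lipschitz (as defined in the context). Then $\tilde f({X})=\psi(f({X}),f(R_0{X}))$ is $\mathcal{G}_{\pm}$-invariant and bi-Lipschitz with respect to $d_{\mathcal{G}_{\pm}}$.
   Context: Point sets are ${X}\in\mathbb{R}^{d\times n}$. $\mathcal{G}_{\pm}$ (resp. $\mathcal{G}_{+}$) acts by column permutations, a common matrix in $O(d)$ (resp. $SO(d)$) applied to all columns, and a common translation; a function is invariant if constant on orbits. $d_{\mathcal{G}_{\pm}}({X},{Y})=\min_{g\in\mathcal{G}_{\pm}}\|{X}-g{Y}\|_F$ and $d_{\mathcal{G}_{+}}({X},{Y})=\min_{g\in\mathcal{G}_{+}}\|{X}-g{Y}\|_F$. A function $F$ is bi-Lipschitz with respect to a metric $\rho$ if there are $0<c\le C$ with $c\,\rho({X},{Y})\le\|F({X})-F({Y})\|_2\le C\rho({X},{Y})$. For $\psi$, bi-Lipschitz means: there are $0<c_\psi\le C_\psi$ such that for all $a,b,a',b'\in\mathbb{R}^m$, with $\delta=\min\{\|a-a'\|_2+\|b-b'\|_2,\ \|a-b'\|_2+\|b-a'\|_2\}$, one has $c_\psi\delta\le\|\psi(a,b)-\psi(a',b')\|_2\le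 C_\psi\delta$. *)

From HB Require Import structures.
From mathcomp Require Import all_boot all_order all_algebra all_fingroup.
From mathcomp Require Import classical_sets reals.
Set Implicit Arguments. Unset Strict Implicit. Unset Printing Implicit Defensive.
Import Order.TTheory GRing.Theory Num.Theory.
Local Open Scope ring_scope.
Local Open Scope classical_set_scope.

Section Defs.
Variable R : realType.

Definition frob (p q : nat) (A : 'M[R]_(p, q)) : R :=
  Num.sqrt (\sum_(i < p) \sum_(j < q) A i j ^+ 2).

Definition orthogonal_mx (d : nat) (Q : 'M[R]_d) : Prop := Q *m Q^T = 1%:M.
Definition special_orthogonal_mx (d : nat) (Q : 'M[R]_d) : Prop :=
  orthogonal_mx Q /\ \det Q = 1.

(* Action of (sigma, Q, t) on X in R^{d x n}:
   columns permuted by sigma, Q applied to every column, t added to every column. *)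
Definition gact (d n : nat) (s : 'S_n) (Q : 'M[R]_d) (t : 'cV[R]_d)
    (X : 'M[R]_(d, n)) : 'M[R]_(d, n) :=
  Q *m X *m perm_mx s + t *m const_mx 1.

Definition group_invariant (d n p : nat) (orth : 'M[R]_d -> Prop)
    (F : 'M[R]_(d, n) -> 'cV[R]_p) : Prop :=
  forall (s : 'S_n) (Q : 'M[R]_d) (t : 'cV[R]_d) (X : 'M[R]_(d, n)),
    orth Q -> F (gact s Q t X) = F X.

Definition G_pm_invariant d n p (F : 'M[R]_(d, n) -> 'cV[R]_p) :=
  group_invariant (@orthogonal_mx d) F.
Definition G_plus_invariant d n p (F : 'M[R]_(d, n) -> 'cV[R]_p) :=
  group_invariant (@special_orthogonal_mx d) F.

(* Quotient distance: min (= inf, the min being attained) of ||X - gY||_F over the group. *)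
Definition group_dist (d n : nat) (orth : 'M[R]_d -> Prop)
    (X Y : 'M[R]_(d, n)) : R :=
  inf [set frob (X - gact g.1 g.2.1 g.2.2 Y) |
         g in [set g : 'S_n * ('M[R]_d * 'cV[R]_d) | orth g.2.1] ].

Definition d_G_pm d n (X Y : 'M[R]_(d, n)) := group_dist (@orthogonal_mx d) X Y.
Definition d_G_plus d n (X Y : 'M[R]_(d, n)) := group_dist (@special_orthogonal_mx d) X Y.

Definition bi_lipschitz (d n p : nat) (rho : 'M[R]_(d, n) -> 'M[R]_(d, n) -> R)
    (F : 'M[R]_(d, n) -> 'cV[R]_p) : Prop :=
  exists c C : R, 0 < c /\ c <= C /\
    forall X Y, c * rho X Y <= frob (F X - F Y) /\ frob (F X - F Y) <= C * rho X Y.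

Definition swap_invariant (m k : nat) (psi : 'cV[R]_m -> 'cV[R]_m -> 'cV[R]_k) : Prop :=
  forall a b, psi a b = psi b a.

Definition psi_bi_lipschitz (m k : nat) (psi : 'cV[R]_m -> 'cV[R]_m -> 'cV[R]_k) : Prop :=
  exists c C : R, 0 < c /\ c <= C /\
    forall a b a' b',
      let delta := Num.min (frob (a - a') + frob (b - b')) (frob (a - b') + frob (b - a')) in
      c * delta <= frob (psi a b - psi a' b') /\ frob (psi a b - psi a' b') <= C * delta.

End Defs.

From Pilot Require Import Defs.
From HB Require Import structures.
From mathcomp Require Import all_boot all_order all_algebra all_fingroup.
From mathcomp Require Import classical_sets reals.
Import Order.TTheory GRing.Theory Num.Theory.
Local Open Scope ring_scope.
Set Implicit Arguments. Unset Strict Implicit.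

(* Every orthogonal Q is either in SO(d) or of the form Q' R0 with Q' in SO(d),
   so acting by G_pm on X either fixes the pair (f X, f (R0 X)) or swaps it, and
   psi absorbs the swap. Dually, d_G_pm X Y is the minimum of
   d_G_plus X Y = d_G_plus (R0 X) (R0 Y) and d_G_plus X (R0 Y) = d_G_plus (R0 X) Y,
   which are precisely the distances that control the two matchings in the
   bi-Lipschitz bound of psi. *)

Lemma min_sum_sandwich (R : realDomainType) (c C x y a b a' b' : R) :
  0 <= c -> 0 <= C ->
  c * x <= a <= C * x -> c * x <= b <= C * x ->
  c * y <= a' <= C * y -> c * y <= b' <= C * y ->
  (c + c) * Num.min x y <= Num.min (a + b) (a' + b') <= (C + C) * Num.min x y.
Proof.
move=> c0 C0 /andP[la ua] /andP[lb ub] /andP[la' ua'] /andP[lb' ub'].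
by rewrite !minr_pMr ?addr_ge0 // !mulrDl !le_min2 ?lerD.
Qed.

Section Orthogonal.
Variable R : realType.

Lemma frob_ge0 p q (A : 'M[R]_(p, q)) : 0 <= frob A.
Proof. exact: sqrtr_ge0. Qed.

Lemma frob_trace p q (A : 'M[R]_(p, q)) : frob A = Num.sqrt (\tr (A^T *m A)).
Proof.
rewrite /frob /mxtrace exchange_big; congr Num.sqrt; apply: eq_bigr => j _.
by rewrite !mxE; apply: eq_bigr => i _; rewrite !mxE expr2.
Qed.

Lemma frob_orthogonal_mulmx d q (Q : 'M[R]_d) (A : 'M[R]_(d, q)) :
  orthogonal_mx Q -> frob (Q *m A) = frob A.
Proof.
by move=> oQ; rewrite !frob_trace trmx_mul -!mulmxA (mulmxA Q^T) (mulmx1C oQ) mul1mx.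
Qed.

Lemma orthogonal_mx1 d : orthogonal_mx (1%:M : 'M[R]_d).
Proof. by rewrite /orthogonal_mx trmx1 mulmx1. Qed.

Lemma special_orthogonal_mx1 d : special_orthogonal_mx (1%:M : 'M[R]_d).
Proof. by split; [exact: orthogonal_mx1 | exact: det1]. Qed.

Lemma orthogonal_mxM d (P Q : 'M[R]_d) :
  orthogonal_mx P -> orthogonal_mx Q -> orthogonal_mx (P *m Q).
Proof.
by move=> oP oQ; rewrite /orthogonal_mx trmx_mul mulmxA -(mulmxA P) oQ mulmx1 oP.
Qed.

Lemma orthogonal_mx_tr d (P : 'M[R]_d) : orthogonal_mx P -> orthogonal_mx P^T.
Proof. by move=> oP; rewrite /orthogonal_mx trmxK (mulmx1C oP). Qed.

Lemma det_orthogonal_mx d (Q : 'M[R]_d) :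
  orthogonal_mx Q -> \det Q = 1 \/ \det Q = -1.
Proof.
move=> oQ; have : \det Q ^+ 2 = 1 by rewrite expr2 -{2}(det_tr Q) -det_mulmx oQ det1.
by move/eqP; rewrite sqrf_eq1 => /orP[] /eqP; [left | right].
Qed.

Lemma special_orthogonal_mxMN1 d (P Q : 'M[R]_d) :
  orthogonal_mx P -> \det P = -1 -> orthogonal_mx Q -> \det Q = -1 ->
  special_orthogonal_mx (P *m Q).
Proof.
by move=> oP dP oQ dQ; split; [exact: orthogonal_mxM | rewrite det_mulmx dP dQ mulrNN mulr1].
Qed.

Lemma special_orthogonal_mx_conj d (P Q : 'M[R]_d) :
  orthogonal_mx P -> special_orthogonal_mx Q -> special_orthogonal_mx (P *m Q *m P^T).
Proof.
move=> oP [oQ dQ]; split.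
  by apply: orthogonal_mxM; [exact: orthogonal_mxM | exact: orthogonal_mx_tr].
by rewrite !det_mulmx dQ mulr1 -det_mulmx oP det1.
Qed.

Lemma mulmx_gact d n (s : 'S_n) (P Q : 'M[R]_d) (t : 'cV[R]_d) (X : 'M[R]_(d, n)) :
  P *m Defs.gact s Q t X = Defs.gact s (P *m Q) (P *m t) X.
Proof. by rewrite /Defs.gact mulmxDr !mulmxA. Qed.

Lemma gact_mulmxr d n (s : 'S_n) (P Q : 'M[R]_d) (t : 'cV[R]_d) (X : 'M[R]_(d, n)) :
  Defs.gact s (Q *m P) t X = Defs.gact s Q t (P *m X).
Proof. by rewrite /Defs.gact !mulmxA. Qed.

End Orthogonal.

Section GroupDist.
Variables (R : realType) (d n : nat).
Implicit Types (orth : 'M[R]_d -> Prop) (X Y : 'M[R]_(d, n)).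

Lemma group_dist_le_frob orth X Y s Q t :
  orth Q -> group_dist orth X Y <= frob (X - Defs.gact s Q t Y).
Proof.
move=> oQ; apply: ge_inf; last by exists (s, (Q, t)).
by exists 0 => _ [g _ <-]; exact: frob_ge0.
Qed.

Lemma le_group_dist orth X Y x :
  orth 1%:M -> (forall s Q t, orth Q -> x <= frob (X - Defs.gact s Q t Y)) ->
  x <= group_dist orth X Y.
Proof.
move=> o1 lb; apply: lb_le_inf => [|_ [g og <-]]; last exact: lb.
by exists (frob (X - Defs.gact 1%g 1%:M 0 Y)), (1%g, (1%:M, 0)).
Qed.

Lemma d_G_plus_mulmx_le (P : 'M[R]_d) X Y :
  orthogonal_mx P -> d_G_plus (P *m X) (P *m Y) <= d_G_plus X Y.
Proof.
move=> oP; apply: le_group_dist => [|s Q t sQ]; first exact: special_orthogonal_mx1.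
have := group_dist_le_frob (P *m X) (P *m Y) s (P *m t) (special_orthogonal_mx_conj oP sQ).
rewrite -gact_mulmxr -mulmxA (mulmx1C oP) mulmx1 -mulmx_gact -mulmxBr.
by rewrite frob_orthogonal_mulmx.
Qed.

Lemma d_G_plus_mulmx (P : 'M[R]_d) X Y :
  orthogonal_mx P -> d_G_plus (P *m X) (P *m Y) = d_G_plus X Y.
Proof.
move=> oP; apply/le_anti; rewrite d_G_plus_mulmx_le //=.
have := d_G_plus_mulmx_le (P *m X) (P *m Y) (orthogonal_mx_tr oP).
by rewrite !mulmxA (mulmx1C oP) !mul1mx.
Qed.

Lemma d_G_pm_le_d_G_plus_mulmx (P : 'M[R]_d) X Y :
  orthogonal_mx P -> d_G_pm X Y <= d_G_plus X (P *m Y).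
Proof.
move=> oP; apply: le_group_dist => [|s Q t [oQ _]]; first exact: special_orthogonal_mx1.
by rewrite -gact_mulmxr; apply: group_dist_le_frob; exact: orthogonal_mxM.
Qed.

End GroupDist.

Section Reflection.
Variables (R : realType) (d n : nat) (R0 : 'M[R]_d).
Hypotheses (R0_orth : orthogonal_mx R0) (R0_det : \det R0 = -1)
  (R0_invol : R0 *m R0 = 1%:M).
Implicit Types X Y : 'M[R]_(d, n).

Lemma gact_reflection s Q t X :
  Defs.gact s Q t X = Defs.gact s (Q *m R0) t (R0 *m X).
Proof. by rewrite gact_mulmxr mulmxA R0_invol mul1mx. Qed.

Lemma d_G_plus_reflection X Y : d_G_plus (R0 *m X) Y = d_G_plus X (R0 *m Y).
Proof. by rewrite -{1}[Y]mul1mx -R0_invol -mulmxA d_G_plus_mulmx. Qed.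

Lemma d_G_pm_min X Y :
  d_G_pm X Y = Num.min (d_G_plus X Y) (d_G_plus X (R0 *m Y)).
Proof.
apply/le_anti/andP; split.
  have := d_G_pm_le_d_G_plus_mulmx X Y (orthogonal_mx1 R d); rewrite mul1mx => le_plus.
  by rewrite le_min le_plus d_G_pm_le_d_G_plus_mulmx.
apply: le_group_dist => [|s Q t oQ]; first exact: orthogonal_mx1.
rewrite ge_min; apply/orP; case: (det_orthogonal_mx oQ) => dQ.
  by left; apply: group_dist_le_frob.
right; rewrite gact_reflection; apply: group_dist_le_frob.
exact: special_orthogonal_mxMN1.
Qed.

Section Lift.
Variables (m : nat) (f : 'M[R]_(d, n) -> 'cV[R]_m).
Hypothesis f_inv : G_plus_invariant f.

Lemma reflection_lift_invariant k (psi : 'cV[R]_m -> 'cV[R]_m -> 'cV[R]_k) :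
  swap_invariant psi -> G_pm_invariant (fun X => psi (f X) (f (R0 *m X))).
Proof.
move=> psi_sym s Q t X oQ /=; rewrite mulmx_gact.
case: (det_orthogonal_mx oQ) => dQ.
  have sR0QR0 : special_orthogonal_mx (R0 *m Q *m R0).
    apply: special_orthogonal_mxMN1 => //; first exact: orthogonal_mxM.
    by rewrite det_mulmx R0_det dQ mulr1.
  have sQ : special_orthogonal_mx Q by [].
  by rewrite (gact_reflection _ (R0 *m Q)) (f_inv _ _ _ sQ) (f_inv _ _ _ sR0QR0).
have sQR0 : special_orthogonal_mx (Q *m R0) by exact: special_orthogonal_mxMN1.
have sR0Q : special_orthogonal_mx (R0 *m Q) by exact: special_orthogonal_mxMN1.
rewrite (gact_reflection _ Q) (f_inv _ _ _ sQR0) (f_inv _ _ _ sR0Q).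
exact: psi_sym.
Qed.

Variables (cf Cf : R).
Hypotheses (cf_ge0 : 0 <= cf) (Cf_ge0 : 0 <= Cf)
  (f_lip : forall X Y,
     cf * d_G_plus X Y <= frob (f X - f Y) /\ frob (f X - f Y) <= Cf * d_G_plus X Y).

Lemma reflection_matching_bounds X Y :
  (cf + cf) * d_G_pm X Y <=
    Num.min (frob (f X - f Y) + frob (f (R0 *m X) - f (R0 *m Y)))
            (frob (f X - f (R0 *m Y)) + frob (f (R0 *m X) - f Y))
  <= (Cf + Cf) * d_G_pm X Y.
Proof.
rewrite d_G_pm_min; apply: min_sum_sandwich => //; apply/andP.
- exact: f_lip.
- by rewrite -(d_G_plus_mulmx _ _ R0_orth); exact: f_lip.
- exact: f_lip.
- by rewrite -d_G_plus_reflection; exact: f_lip.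
Qed.

End Lift.
End Reflection.

Theorem proposition1 (R : realType) (d n m k : nat)
    (f : 'M[R]_(d, n) -> 'cV[R]_m) (R0 : 'M[R]_d)
    (psi : 'cV[R]_m -> 'cV[R]_m -> 'cV[R]_k) :
  G_plus_invariant f ->
  bi_lipschitz (@d_G_plus R d n) f ->
  orthogonal_mx R0 -> \det R0 = -1 -> R0 *m R0 = 1%:M ->
  swap_invariant psi ->
  psi_bi_lipschitz psi ->
  G_pm_invariant (fun X => psi (f X) (f (R0 *m X))) /\
  bi_lipschitz (@d_G_pm R d n) (fun X => psi (f X) (f (R0 *m X))).
Proof.
move=> f_inv [cf [Cf [cf_gt0 [cf_le_Cf f_lip]]]] R0_orth R0_det R0_invol psi_sym.
move=> [cp [Cp [cp_gt0 [cp_le_Cp psi_lip]]]].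
split; first exact: reflection_lift_invariant.
have cf_ge0 := ltW cf_gt0; have Cf_ge0 := le_trans cf_ge0 cf_le_Cf.
have Cp_ge0 := le_trans (ltW cp_gt0) cp_le_Cp.
exists (cp * (cf + cf)), (Cp * (Cf + Cf)); split; first by rewrite mulr_gt0 ?addr_gt0.
split; first by apply: ler_pM; rewrite ?(ltW cp_gt0) ?addr_ge0 ?lerD.
move=> X Y; have [lo hi] := psi_lip (f X) (f (R0 *m X)) (f Y) (f (R0 *m Y)).
have /andP[lo' hi'] :=
  reflection_matching_bounds R0_orth R0_det R0_invol cf_ge0 Cf_ge0 f_lip X Y.
rewrite -!mulrA; split; first by apply: le_trans lo; rewrite ler_pM2l.
by apply: le_trans hi _; rewrite ler_wpM2l.
Qed.
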